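(* Let $G$ be a connected $m$-uniform hypergraph on $n$ vertices, and let $d(G)$ be the maximum length of a path in $G$. Then $s(G)\le m^{n-d(G)-1}$ and $\gamma(G)\le(n-d(G)-1)\mathrm{cl}(m)$.
   Context: Paths: a walk $v_1,e_1,\dots,v_l,e_l,v_{l+1}$ (with $\{v_i,v_{i+1}\}\subseteq e_i$) is a path of length $l$ if its vertices and edges are distinct and $v_i\notin\bigcup_{j>i}e_j$ for $i=1,\dots,l-1$. Adjacency tensor $\mathcal{A}(G)$ (vertices $v_1,\dots,v_n$): $a_{i_1\cdots i_m}=\frac1{(m-1)!}$ if $\{v_{i_1},\dots,v_{i_m}\}$ is an edge, else $0$. For a tensor $\mathcal{A}$: eigenvectors $\mathcal{A}x^{m-1}=\lambda x^{[m-1]}$, $x\ne0$, $(\mathcal{A}x^{m-1})_i=\sum a_{ii_2\cdots i_m}x_{i_2}\cdots x_{i_m}$; $\rho(\mathcal{A})$ spectral radius. Stabilizing index $s(\mathcal{A})$: number of invertible diagonal $D$ with $d_{11}=1$ and $\mathcal{A}=D^{-(m-1)}\mathcal{A}D$, $(D^{-(m-1)}\mathcal{A}D)_{i_1\cdots i_m}=d_{i_1}^{-(m-1)}a_{i_1\cdots i_m}d_{i_2}\cdots d_{i_m}$. Stabilizing dimension $\gamma(\mathcal{A})$: composition length of the $\mathbb{Z}_m$-module of eigenvectors $y$ for $\rho(\mathcal{A})$ normalized by $y_1=1$, with operation $y\circ\hat y=D_yD_{\hat y}v_p$, $D_y=\mathrm{diag}(y_i/|y_i|)$, $v_p$ the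 positive one. $s(G)=s(\mathcal{A}(G))$, $\gamma(G)=\gamma(\mathcal{A}(G))$. $\mathrm{cl}(m)$: number of prime factors of $m$ with multiplicity. *)

From HB Require Import structures.
From mathcomp Require Import all_boot all_order all_algebra.
From mathcomp Require Import complex.
From mathcomp Require Import boolp classical_sets reals Rstruct.
Set Implicit Arguments. Unset Strict Implicit. Unset Printing Implicit Defensive.
Import Order.TTheory GRing.Theory Num.Theory.
Local Open Scope ring_scope.
Local Open Scope classical_set_scope.

Definition CC : Type := (Rdefinitions.R)[i].

(* ---------- hypergraphs on vertex set 'I_n (vertex v_k is k-1) ---------- *)
Definition uniform (n m : nat) (E : {set {set 'I_n}}) : Prop :=
  forall e, e \in E -> #|e| = m.

Definition hadj (n : nat) (E : {set {set 'I_n}}) : rel 'I_n :=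
  fun u v => [exists e in E, (u \in e) && (v \in e)].

Definition hconnected (n : nat) (E : {set {set 'I_n}}) : Prop :=
  forall u v : 'I_n, connect (hadj E) u v.

(* a path of length l: vertices v_1..v_{l+1} (vs 0 .. vs l) and edges
   e_1..e_l (es 0 .. es l-1); indices 0-based *)
Definition is_path (n : nat) (E : {set {set 'I_n}}) (l : nat)
  (vs : 'I_l.+1 -> 'I_n) (es : 'I_l -> {set 'I_n}) : Prop :=
  [/\ forall i, es i \in E,
      injective vs, injective es,
      (forall i : 'I_l, (vs (inord i) \in es i) /\ (vs (inord i.+1) \in es i)) &
      (forall (i : 'I_l.+1) (j : 'I_l), (i < l.-1)%N -> (i < j)%N ->
          vs i \notin es j)].

Definition has_path (n : nat) (E : {set {set 'I_n}}) (l : nat) : Prop :=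
  exists vs es, @is_path n E l vs es.

Definition max_path_length (n : nat) (E : {set {set 'I_n}}) (d : nat) : Prop :=
  has_path E d /\ forall l, has_path E l -> (l <= d)%N.

(* entry a_{i1 i2 ... im} is  A i1 js  with js k = i_{k+2} *)
Definition tensor (m n : nat) := 'I_n -> {ffun 'I_m.-1 -> 'I_n} -> CC.

Definition adj_tensor (n m : nat) (E : {set {set 'I_n}}) : tensor m n :=
  fun i js => if (i |: [set js k | k : 'I_m.-1]) \in E
              then ((m.-1)`!%:R)^-1 else 0.

Definition tapply (m n : nat) (A : tensor m n) (x : 'I_n -> CC) (i : 'I_n) : CC :=
  \sum_(js : {ffun 'I_m.-1 -> 'I_n}) A i js * \prod_(k : 'I_m.-1) x (js k).

Definition eigenpair (m n : nat) (A : tensor m n) (lam : CC) (x : 'I_n -> CC) : Prop :=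
  (exists i, x i != 0) /\ forall i, tapply A x i = lam * x i ^+ m.-1.

Definition eigenvalue (m n : nat) (A : tensor m n) (lam : CC) : Prop :=
  exists x, eigenpair A lam x.

Definition spectral_radius (m n : nat) (A : tensor m n) : Rdefinitions.R :=
  sup [set complex.Re `|lam| | lam in [set l | eigenvalue A l]].

(* D = diag(d); the condition A = D^{-(m-1)} A D, d_{11} = 1, D invertible *)
Definition stabilizing (m n : nat) (A : tensor m n) (i1 : 'I_n) (d : {ffun 'I_n -> CC}) : Prop :=
  [/\ forall i, d i != 0, d i1 = 1 &
      forall i js, A i js = (d i ^+ m.-1)^-1 * A i js * \prod_(k : 'I_m.-1) d (js k)].

Definition stab_index_le (m n : nat) (A : tensor m n) (i1 : 'I_n) (N : nat) : Prop :=
  forall s : seq {ffun 'I_n -> CC}, uniq s ->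
    (forall d, d \in s -> stabilizing A i1 d) -> (size s <= N)%N.

Definition rho_vecs (m n : nat) (A : tensor m n) (i1 : 'I_n) : set ('I_n -> CC) :=
  [set y | eigenpair A ((spectral_radius A)%:C)%C y /\ y i1 = 1].

Definition circ (n : nat) (vp y y' : 'I_n -> CC) : 'I_n -> CC :=
  fun i => (y i / `|y i|) * (y' i / `|y' i|) * vp i.

(* submodules of the Z_m-module (rho_vecs, o) with zero element v_p *)
Definition submodule (m n : nat) (A : tensor m n) (i1 : 'I_n) (vp : 'I_n -> CC)
  (S : set ('I_n -> CC)) : Prop :=
  [/\ S `<=` rho_vecs A i1, S vp &
      forall y y', S y -> S y' -> S (circ vp y y')].

(* gamma(A) <= N: every strictly increasing chain of submodules
   S_0 < S_1 < ... < S_k has length k <= N (composition length <= N),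
   where v_p is the positive normalized eigenvector for rho(A) *)
Definition stab_dim_le (m n : nat) (A : tensor m n) (i1 : 'I_n) (N : nat) : Prop :=
  forall vp, rho_vecs A i1 vp -> (forall i, 0 < vp i) ->
  forall (k : nat) (S : nat -> set ('I_n -> CC)),
    (forall i, (i <= k)%N -> submodule A i1 vp (S i)) ->
    (forall i, (i < k)%N -> S i `<` S i.+1) ->
    (k <= N)%N.

Definition cl (m : nat) : nat := \sum_(p <- primes m) logn p m.

From HB Require Import structures.
From mathcomp Require Import all_boot all_order all_algebra all_fingroup all_solvable all_field.
From mathcomp Require Import complex.
From mathcomp Require Import boolp classical_sets reals Rstruct.
From mathcomp Require Import zify.
Set Implicit Arguments. Unset Strict Implicit. Unset Printing Implicit Defensive.
Import Order.TTheory GRing.Theory Num.Theory.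
Local Open Scope ring_scope.

(* A stabilizing diagonal d, and the phase y / v_p of an eigenvector y for
   rho(A) (whose modulus is v_p by a Perron-Frobenius argument), are balanced:
   u_a ^ (m - 1) = prod_(j in e :\ a) u_j for every edge e containing a.
   By connectivity all u_i ^ m agree, and walking a path v_1 ... v_(d+1)
   backwards, each u (v_a) is determined by u (v_(d+1)) and the values off the
   path, because e_a meets the earlier path vertices only in v_a.  So a
   normalized balanced vector is determined by the m-th roots of unity
   u_f / u (v_(d+1)) for the n - d - 1 vertices f off the path, and taking
   discrete logarithms is an injective homomorphism into (Z/mZ)^(n-d-1).  This
   bounds s by m ^ (n - d - 1), and turns a chain of submodules into a strict
   chain of subgroups, of length at most cl (m ^ (n - d - 1)) = (n - d - 1) cl m. *)

Lemma cl_logn_sum a N : (a < N)%N -> cl a = (\sum_(p < N) logn p a)%N.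
Proof.
move=> lt_aN; rewrite /cl (bigID (fun p : 'I_N => val p \in primes a)) /=.
rewrite [X in (_ + X)%N]big1 ?addn0; last first.
  by move=> p p_a; apply/eqP; rewrite -leqn0 leqNgt logn_gt0.
rewrite -(big_mkord (mem (primes a)) (logn^~ a)) -[RHS]big_filter.
apply: perm_big; apply: uniq_perm; rewrite ?primes_uniq ?filter_uniq ?iota_uniq //.
move=> p; rewrite mem_filter mem_index_iota /=; case p_a: (p \in primes a) => //=.
by move: p_a; rewrite mem_primes => /and3P[_ a_gt0 /(dvdn_leq a_gt0)/leq_ltn_trans->].
Qed.

Lemma clM a b : (0 < a)%N -> (0 < b)%N -> cl (a * b) = (cl a + cl b)%N.
Proof.
move=> a_gt0 b_gt0; pose N := (a * b).+1.
rewrite !(@cl_logn_sum _ N) ?ltnS ?leq_pmulr ?leq_pmull // -big_split /=.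
by apply: eq_bigr => p _; rewrite lognM.
Qed.

Lemma clX a k : (0 < a)%N -> cl (a ^ k) = (k * cl a)%N.
Proof.
move=> a_gt0; elim: k => [|k IHk]; first by rewrite expn0 /cl big_nil.
by rewrite expnS clM ?expn_gt0 ?a_gt0 // IHk mulSn.
Qed.

Lemma cl_gt0 a : (1 < a)%N -> (0 < cl a)%N.
Proof.
move=> a_gt1; have pdiv_a : pdiv a \in primes a.
  by rewrite mem_primes pdiv_prime ?pdiv_dvd //; lia.
by rewrite /cl (big_rem _ pdiv_a) /= addn_gt0 logn_gt0 pdiv_a.
Qed.

Lemma cl_dvdn a b : (0 < b)%N -> (a %| b)%N -> (cl a <= cl b)%N.
Proof.
move=> b_gt0 /dvdnP[q def_b]; move: b_gt0; rewrite def_b muln_gt0 => /andP[q_gt0 a_gt0].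
by rewrite mulnC clM ?leq_addr.
Qed.

Lemma ltn_cl_dvdn a b : (0 < b)%N -> (a %| b)%N -> (a < b)%N -> (cl a < cl b)%N.
Proof.
move=> b_gt0 /dvdnP[q def_b]; move: b_gt0; rewrite def_b muln_gt0 => /andP[q_gt0 a_gt0].
rewrite -{1}[a]mul1n ltn_pmul2r // => q_gt1.
by rewrite mulnC clM // -addn1 leq_add2l cl_gt0.
Qed.

Lemma proper_chain_cl (gT : finGroupType) (G : nat -> {group gT}) k :
  (forall i, (i < k)%N -> G i \proper G i.+1) -> (k <= cl #|G k|)%N.
Proof.
elim: k => [//|k IHk] chainG; have properGk := chainG k (ltnSn k).
apply: leq_ltn_trans (IHk (fun i lt_ik => chainG i (ltnW lt_ik))) _.
by rewrite ltn_cl_dvdn ?cardG_gt0 ?cardSg ?proper_card ?proper_sub.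
Qed.

Lemma connect_propagate (T : finType) (e : rel T) (P : T -> Prop) x y :
  (forall a b, e a b -> P a -> P b) -> connect e x y -> P x -> P y.
Proof.
move=> eP /connectP[p + ->]; elim: p x => //= z p IHp x /andP[e_xz e_p] Px.
exact: IHp e_p (eP _ _ e_xz Px).
Qed.

Lemma prim_root_exists (F : numClosedFieldType) k :
  (0 < k)%N -> exists z : F, k.-primitive_root z.
Proof.
move=> k_gt0; have [rs def_p] := closed_field_poly_normal ('X^k - 1 : {poly F}).
rewrite (monicP (monicXnsubC 1 k_gt0)) scale1r in def_p.
have rs_roots : all k.-unity_root rs by apply/allP=> z; rewrite -root_prod_XsubC -def_p.
have size_rs : (k < (size rs).+1)%N by rewrite -(size_prod_XsubC rs id) -def_p size_XnsubC.
have uniq_rs : uniq rs.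
  by rewrite -separable_prod_XsubC -def_p separable_Xn_sub_1 // pnatr_eq0 -lt0n.
by have /hasP[z _ ?] := has_prim_root k_gt0 rs_roots uniq_rs size_rs; exists z.
Qed.

Section DiscreteLog.
Variables (F : fieldType) (m : nat) (om : F).
Hypotheses (m_gt1 : (1 < m)%N) (om_prim : m.-primitive_root om).

(* Junk value 0 when z is not an m-th root of unity. *)
Definition dlog (z : F) : 'Z_m := odflt 0 [pick i : 'Z_m | om ^+ i == z].

Lemma Zp_expr_inj : injective (fun i : 'Z_m => om ^+ i).
Proof.
have Zm_lt (i : 'Z_m) : (i < m)%N by rewrite -[m in (_ < m)%N](Zp_cast m_gt1).
move=> i j /eqP; rewrite (eq_prim_root_expr om_prim) !modn_small ?Zm_lt //.
by move/eqP/val_inj.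
Qed.

Lemma Zp_exprD (i j : 'Z_m) : om ^+ (i + j)%R = om ^+ i * om ^+ j.
Proof.
rewrite -exprD -[RHS](prim_expr_mod om_prim); congr (om ^+ _).
by congr (_ %% _)%N; rewrite Zp_cast.
Qed.

Lemma expr_dlog z : z ^+ m = 1 -> om ^+ dlog z = z.
Proof.
move=> zm1; rewrite /dlog; case: pickP => [i /eqP // | no_log].
have [i def_z] := prim_rootP om_prim zm1.
by have := no_log (inZp i); rewrite /= (Zp_cast m_gt1) modn_small // def_z eqxx.
Qed.

Lemma dlog_inj z z' : z ^+ m = 1 -> z' ^+ m = 1 -> dlog z = dlog z' -> z = z'.
Proof. by move=> zm1 z'm1 eq_log; rewrite -(expr_dlog zm1) eq_log expr_dlog. Qed.

Lemma dlogM z z' : z ^+ m = 1 -> z' ^+ m = 1 -> dlog (z * z') = dlog z + dlog z'.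
Proof.
move=> zm1 z'm1; apply: Zp_expr_inj; rewrite /= expr_dlog; last first.
  by rewrite exprMn zm1 z'm1 mulr1.
by rewrite Zp_exprD !expr_dlog.
Qed.

Lemma dlog1 : dlog 1 = 0.
Proof. by apply: Zp_expr_inj; rewrite /= expr_dlog ?expr1n. Qed.

End DiscreteLog.

Arguments dlog {F} m om z.

Section Balanced.
Variables (F : fieldType) (n m : nat) (E : {set {set 'I_n}}).
Hypotheses (m_gt0 : (0 < m)%N) (E_uniform : uniform m E) (E_conn : hconnected E).

Definition balanced (u : 'I_n -> F) :=
  (forall i, u i != 0) /\
  forall e a, e \in E -> a \in e -> u a ^+ m.-1 = \prod_(j in e :\ a) u j.

Lemma card_edgeD1 e a : e \in E -> a \in e -> #|e :\ a| = m.-1.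
Proof. by move=> Ee ea; have := cardsD1 a e; rewrite ea E_uniform //; lia. Qed.

Lemma balanced_edge u e a : balanced u -> e \in E -> a \in e ->
  u a ^+ m = \prod_(j in e) u j.
Proof.
by move=> [_ bal_u] Ee ea; rewrite (big_setD1 _ ea) /= -bal_u // -exprS prednK.
Qed.

Lemma balanced_expr_eq u i j : balanced u -> u i ^+ m = u j ^+ m.
Proof.
move=> bal_u.
apply: (connect_propagate (P := fun j => u i ^+ m = u j ^+ m) _ (E_conn i j)) => // a b.
move=> /existsP[e /andP[Ee /andP[ea eb]]] ->.
by rewrite (balanced_edge bal_u Ee ea) (balanced_edge bal_u Ee eb).
Qed.

Lemma balanced_ratio_root u i j : balanced u -> (u i / u j) ^+ m = 1.
Proof.
move=> bal_u; have [u_neq0 _] := bal_u.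
by rewrite expr_div_n (balanced_expr_eq i j bal_u) divff // expf_neq0.
Qed.

Lemma balancedZ u c : balanced u -> c != 0 -> balanced (fun i => c * u i).
Proof.
move=> [u_neq0 bal_u] c_neq0; split => [i | e a Ee ea]; first by rewrite mulf_neq0.
by rewrite big_split prodr_const card_edgeD1 // exprMn (bal_u e).
Qed.

Section Path.
Variables (d : nat) (vs : 'I_d.+1 -> 'I_n) (es : 'I_d -> {set 'I_n}).
Hypothesis vs_es_path : is_path E vs es.

Definition path_inner := [set vs (inord a) | a : 'I_d].
Definition path_end := vs ord_max.
Definition off_path := ~: path_inner :\ path_end.

Lemma path_inner_inj : injective (fun a : 'I_d => vs (inord a)).
Proof.
have [_ vs_inj _ _ _] := vs_es_path.
move=> a b /vs_inj/(congr1 (@nat_of_ord _)).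
by rewrite !inordK ?ltnS 1?ltnW //; apply: val_inj.
Qed.

Lemma path_end_notin_inner : path_end \notin path_inner.
Proof.
have [_ vs_inj _ _ _] := vs_es_path.
apply/imsetP => -[a _ /vs_inj/(congr1 (@nat_of_ord _))]; rewrite /= inordK ?ltnS 1?ltnW //.
by move=> da; have := ltn_ord a; rewrite -da ltnn.
Qed.

Lemma card_off_path : #|off_path| = (n - d - 1)%N.
Proof.
have := cardsD1 path_end (~: path_inner); rewrite inE path_end_notin_inner.
have := cardsC path_inner; rewrite card_imset ?card_ord; last exact: path_inner_inj.
rewrite /off_path; lia.
Qed.

Lemma path_edge_later (a b : 'I_d) : vs (inord b) \in es a -> (a <= b)%N.
Proof.
have [_ _ _ _ path_fresh] := vs_es_path.
apply: contraTleq => lt_ba; have b_lt : (b < d.+1)%N by rewrite ltnW ?ltnS.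
by apply: path_fresh; rewrite inordK //; have := ltn_ord a; lia.
Qed.

Lemma balanced_path_vertex u (a : 'I_d) : balanced u ->
  u (vs (inord a)) = u path_end ^+ m / \prod_(j in es a :\ vs (inord a)) u j.
Proof.
move=> bal_u; have [u_neq0 bal_edge] := bal_u; have [Ees _ _ on_es _] := vs_es_path.
rewrite -bal_edge ?Ees ?(proj1 (on_es a)) // (balanced_expr_eq path_end (vs (inord a)) bal_u).
by rewrite -{1}(prednK m_gt0) exprS mulfK // expf_neq0.
Qed.

Lemma balanced_eq_off_inner u u' : balanced u -> balanced u' ->
  {in ~: path_inner, u =1 u'} -> u =1 u'.
Proof.
move=> bal_u bal_u' eq_off.
have eq_inner k (a : 'I_d) : (d - a)%N = k -> u (vs (inord a)) = u' (vs (inord a)).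
  elim/ltn_ind: k a => k IHk a def_k.
  rewrite !balanced_path_vertex // (eq_off path_end) ?inE ?path_end_notin_inner //.
  congr (_ / _); apply: eq_bigr => j /setD1P[j_neq j_es].
  have [/imsetP[b _ def_j] | j_off] := boolP (j \in path_inner); last by rewrite eq_off ?inE.
  rewrite def_j in j_neq j_es *; have le_ab := path_edge_later j_es.
  have ne_ab : a != b by apply: contraNneq j_neq => ->.
  have lt_ab : (a < b)%N by rewrite ltn_neqAle ne_ab le_ab.
  by apply: (IHk (d - b)%N); rewrite // -def_k; have := ltn_ord b; lia.
move=> j; have [/imsetP[a _ ->] | j_off] := boolP (j \in path_inner).
  exact: (eq_inner (d - a)%N).
by rewrite eq_off ?inE.
Qed.

Lemma balanced_eq_ratio u u' i : balanced u -> balanced u' -> u i = u' i ->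
  {in off_path, forall f, u f / u path_end = u' f / u' path_end} -> u =1 u'.
Proof.
move=> bal_u bal_u' eq_i eq_ratio; have [u_neq0 _] := bal_u; have [u'_neq0 _] := bal_u'.
pose c := u' path_end / u path_end.
have c_neq0 : c != 0 by rewrite mulf_neq0 ?invr_eq0.
have eq_cu : (fun j => c * u j) =1 u'.
  apply: balanced_eq_off_inner => // [|j]; first exact: balancedZ.
  rewrite inE => j_off.
  have [-> | j_neq] := eqVneq j path_end; first by rewrite /c divfK.
  by rewrite /c mulrAC -mulrA eq_ratio ?inE ?j_neq ?inE // mulrCA divff ?mulr1.
have c1 : c = 1 by apply: (mulIf (u_neq0 i)); rewrite mul1r eq_cu.
by move=> j; rewrite -eq_cu c1 mul1r.
Qed.

Section RatioKey.
Variable om : F.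
Hypotheses (m_gt1 : (1 < m)%N) (om_prim : m.-primitive_root om).

Definition ratio_key (u : 'I_n -> F) : 'rV['Z_m]_#|off_path| :=
  \row_k dlog m om (u (enum_val k) / u path_end).

Lemma ratio_key_inj u u' i : balanced u -> balanced u' -> u i = u' i ->
  ratio_key u = ratio_key u' -> u =1 u'.
Proof.
move=> bal_u bal_u' eq_i eq_key; apply: balanced_eq_ratio eq_i _ => // f f_off.
have /rowP/(_ (enum_rank_in f_off f)) := eq_key; rewrite !mxE enum_rankK_in //.
by apply: dlog_inj; rewrite ?balanced_ratio_root.
Qed.

Lemma ratio_keyM u u' : balanced u -> balanced u' ->
  ratio_key (fun i => u i * u' i) = ratio_key u + ratio_key u'.
Proof.
move=> bal_u bal_u'; apply/rowP => k; rewrite !mxE invfM mulrACA.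
by rewrite [LHS]dlogM // balanced_ratio_root.
Qed.

Lemma ratio_key1 : ratio_key (fun=> 1) = 0.
Proof. by apply/rowP => k; rewrite !mxE divr1 dlog1. Qed.

Lemma card_ratio_keys : #|{: 'rV['Z_m]_#|off_path|}| = (m ^ (n - d - 1))%N.
Proof. by rewrite card_mx card_ord Zp_cast // mul1n card_off_path. Qed.

End RatioKey.
End Path.
End Balanced.

Lemma enum_set_ffun (R : comPzSemiRingType) (T : finType) (B : {set T}) N : #|B| = N ->
  exists js : {ffun 'I_N -> T}, [set js k | k : 'I_N] = B /\
    forall f : T -> R, \prod_(k < N) f (js k) = \prod_(j in B) f j.
Proof.
move=> <-; exists [ffun k => enum_val k]; split => [|f].
  apply/setP => x; apply/imsetP/idP => [[k _ ->] | Bx]; first by rewrite ffunE enum_valP.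
  by exists (enum_rank_in Bx x); rewrite ?ffunE ?enum_rankK_in.
by rewrite (big_enum_val f); apply: eq_bigr => k _; rewrite ffunE.
Qed.

Lemma eq_prod_ler (R : numDomainType) (I : finType) (B : {set I}) (x y : I -> R) b :
  b \in B -> (forall j, j \in B -> 0 <= x j <= y j) -> (forall j, j \in B -> 0 < y j) ->
  \prod_(j in B) x j = \prod_(j in B) y j -> x b = y b.
Proof.
move=> Bb xy_B y_gt0; rewrite !(big_setD1 _ Bb) /= => eq_prod.
have /andP[x_b_ge0 le_xy_b] := xy_B b Bb.
have prod_gt0 : 0 < \prod_(j in B :\ b) y j.
  by apply: prodr_gt0 => j /setD1P[_ /y_gt0].
have prod_le : \prod_(j in B :\ b) x j <= \prod_(j in B :\ b) y j.
  by apply: ler_prod => j /setD1P[_ /xy_B].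
apply/eqP; rewrite eq_le le_xy_b -(ler_pM2r prod_gt0) -eq_prod.
by rewrite ler_wpM2l.
Qed.

Section NonnegTensor.
Variables (m n : nat) (A : tensor m n).
Hypothesis A_ge0 : forall i js, 0 <= A i js.

Lemma tapply_ge0 x i : (forall j, 0 <= x j) -> 0 <= tapply A x i.
Proof. by move=> x_ge0; apply: sumr_ge0 => js _; rewrite mulr_ge0 ?prodr_ge0. Qed.

Lemma ler_tapply x y i : (forall j, 0 <= x j <= y j) -> tapply A x i <= tapply A y i.
Proof. by move=> le_xy; apply: ler_sum => js _; rewrite ler_wpM2l ?ler_prod. Qed.

Lemma tapplyZ c x i : tapply A (fun j => c * x j) i = c ^+ m.-1 * tapply A x i.
Proof.
rewrite /tapply mulr_sumr; apply: eq_bigr => js _.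
by rewrite big_split prodr_const card_ord mulrCA.
Qed.

Lemma norm_tapply y i : `|tapply A y i| <= tapply A (fun j => `|y j|) i.
Proof.
apply: le_trans (ler_norm_sum _ _ _) _; apply: ler_sum => js _.
by rewrite normrM normr_prod ger0_norm.
Qed.

Lemma eigenvalue_ge0 lam x : eigenpair A lam x -> (forall i, 0 < x i) -> 0 <= lam.
Proof.
move=> [[i _] x_eigen] x_gt0; have x_pow_gt0 : 0 < x i ^+ m.-1 by rewrite exprn_gt0.
by rewrite -(pmulr_lge0 _ x_pow_gt0) -x_eigen tapply_ge0 // => j; rewrite ltW.
Qed.

End NonnegTensor.

Section AdjacencyTensor.
Variables (n m : nat) (E : {set {set 'I_n}}).
Hypotheses (m_gt0 : (0 < m)%N) (E_uniform : uniform m E) (E_conn : hconnected E).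
Local Notation A := (@adj_tensor n m E).

Definition adj_weight : CC := ((m.-1)`!%:R)^-1.

Lemma adj_weight_gt0 : 0 < adj_weight.
Proof. by rewrite invr_gt0 ltr0n fact_gt0. Qed.

Lemma adj_tensor_ge0 i js : 0 <= A i js.
Proof. by rewrite /adj_tensor; case: ifP => // _; rewrite ltW ?adj_weight_gt0. Qed.

Lemma adj_tensor_edge e a : e \in E -> a \in e ->
  exists js, A a js = adj_weight /\
    forall f : 'I_n -> CC, \prod_(k < m.-1) f (js k) = \prod_(j in e :\ a) f j.
Proof.
move=> Ee ea.
have [js [im_js prod_js]] := enum_set_ffun CC (card_edgeD1 m_gt0 E_uniform Ee ea).
by exists js; split => //; rewrite /adj_tensor im_js finset.setD1K ?Ee.
Qed.

Lemma stabilizing_balanced i0 (x : {ffun 'I_n -> CC}) :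
  stabilizing A i0 x -> balanced m E x.
Proof.
case=> x_neq0 _ x_stab; split => // e a Ee ea.
have [js [A_js prod_js]] := adj_tensor_edge Ee ea; have := x_stab a js.
rewrite A_js prod_js mulrC mulrA -[LHS]mul1r => /(mulIf (lt0r_neq0 adj_weight_gt0)).
by move/(congr1 ( *%R^~ (x a ^+ m.-1))); rewrite mul1r divfK ?expf_neq0.
Qed.

Lemma edge_term_eq (c : CC) x z e a : e \in E -> a \in e ->
  (forall js, `|c * (A a js * \prod_(k < m.-1) x (js k))| <=
              A a js * \prod_(k < m.-1) z (js k)) ->
  c * tapply A x a = tapply A z a ->
  c * \prod_(j in e :\ a) x j = \prod_(j in e :\ a) z j.
Proof.
move=> Ee ea le_terms; rewrite /tapply mulr_sumr.
move=> /(normC_sum_upper (fun js _ => le_terms js)).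
have [js [A_js prod_js]] := adj_tensor_edge Ee ea.
move/(_ js isT); rewrite A_js !prod_js mulrCA.
by move/(mulfI (lt0r_neq0 adj_weight_gt0)).
Qed.

Section PositiveEigenvector.
Variables (lam : CC) (vp : 'I_n -> CC) (i0 : 'I_n).
Hypotheses (vp_eigen : eigenpair A lam vp) (vp_gt0 : forall i, 0 < vp i).

(* Equality in |A y^(m-1)| <= A |y|^(m-1) <= A (c vp)^(m-1) at a forces
   equality in the term of every edge through a. *)
Lemma eigen_dominated_propagate y c a b : eigenpair A lam y -> 0 < c ->
  (forall j, `|y j| <= c * vp j) -> hadj E a b -> `|y a| = c * vp a ->
  `|y b| = c * vp b.
Proof.
move=> [_ y_eigen] c_gt0 y_le /existsP[e /andP[Ee /andP[ea eb]]] eq_a.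
have [-> // | ne_ba] := eqVneq b a; have [_ vp_eq] := vp_eigen.
have lam_ge0 := eigenvalue_ge0 adj_tensor_ge0 vp_eigen vp_gt0.
have y_bounds j : 0 <= `|y j| <= c * vp j by rewrite normr_ge0 y_le.
have eq_tapply : tapply A (fun j => `|y j|) a = tapply A (fun j => c * vp j) a.
  apply/eqP; rewrite eq_le ler_tapply ?adj_tensor_ge0 //=; last exact: adj_tensor_ge0.
  rewrite tapplyZ vp_eq mulrCA -exprMn -eq_a.
  rewrite -(ger0_norm lam_ge0) -normrX -normrM -y_eigen.
  exact: (norm_tapply adj_tensor_ge0 y a).
apply: (@eq_prod_ler _ _ (e :\ a) (fun j => `|y j|) (fun j => c * vp j)).
- by rewrite !inE ne_ba.
- by move=> j _; apply: y_bounds.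
- by move=> j _; rewrite mulr_gt0.
rewrite -[LHS]mul1r; apply: (edge_term_eq Ee ea) => [js|]; last by rewrite mul1r.
rewrite mul1r normrM normr_prod ger0_norm ?adj_tensor_ge0 // ler_wpM2l ?adj_tensor_ge0 //.
by apply: ler_prod => k _; rewrite normr_id y_bounds.
Qed.

Lemma eigenvector_norm y : eigenpair A lam y -> y i0 = vp i0 -> forall i, `|y i| = vp i.
Proof.
move=> y_eigen y_i0; pose r i := `|y i| / vp i.
have r_ge0 i : 0 <= r i by rewrite divr_ge0 ?normr_ge0 ?ltW.
have [i1 _ r_max] := @arg_maxP _ _ _ i0 xpredT (fun i => complex.Re (r i)) isT.
have r_le i : r i <= r i1.
  by rewrite lecE (ger0_Im (r_ge0 i)) (ger0_Im (r_ge0 i1)) eqxx /=; apply: r_max.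
have y_le i : `|y i| <= r i1 * vp i.
  rewrite -[`|y i|](divfK (lt0r_neq0 (vp_gt0 i))).
  by apply: ler_wpM2r; [exact: ltW | exact: r_le].
have r_i0 : r i0 = 1 by rewrite /r y_i0 gtr0_norm ?divff ?lt0r_neq0.
have c_gt0 : 0 < r i1 by rewrite (lt_le_trans ltr01) // -r_i0.
have eq_all j : `|y j| = r i1 * vp j.
  apply: (connect_propagate (P := fun j => `|y j| = r i1 * vp j) _ (E_conn i1 j)).
    by move=> a b; apply: (eigen_dominated_propagate y_eigen c_gt0 y_le).
  by rewrite /r divfK ?lt0r_neq0.
have c1 : r i1 = 1.
  by apply: (mulIf (lt0r_neq0 (vp_gt0 i0))); rewrite -eq_all y_i0 mul1r gtr0_norm.
by move=> i; rewrite eq_all c1 mul1r.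
Qed.

Lemma eigenvector_phase_balanced y : eigenpair A lam y -> y i0 = vp i0 ->
  balanced m E (fun i => y i / vp i).
Proof.
move=> y_eigen y_i0; have y_norm := eigenvector_norm y_eigen y_i0.
have [[_ y_eq] [_ vp_eq]] := (y_eigen, vp_eigen).
have vp_neq0 i : vp i != 0 by rewrite lt0r_neq0.
have y_neq0 i : y i != 0 by rewrite -normr_eq0 y_norm.
have phase_norm i : `|y i / vp i| = 1 by rewrite normf_div y_norm gtr0_norm ?divff.
split => [i | e a Ee ea]; first by rewrite mulf_neq0 ?invr_eq0.
pose w := (y a / vp a) ^+ m.-1.
have w_neq0 : w != 0 by rewrite expf_neq0 ?mulf_neq0 ?invr_eq0.
have w_norm : `|w| = 1 by rewrite normrX phase_norm expr1n.
have le_terms js : `|w^-1 * (A a js * \prod_(k < m.-1) y (js k))| <=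
                   A a js * \prod_(k < m.-1) vp (js k).
  rewrite normrM normfV w_norm invr1 mul1r normrM normr_prod ger0_norm ?adj_tensor_ge0 //.
  by under eq_bigr do rewrite y_norm.
have eq_tapply : w^-1 * tapply A y a = tapply A vp a.
  by rewrite y_eq vp_eq -[y a](divfK (vp_neq0 a)) exprMn -/w mulrCA mulKf.
have := edge_term_eq Ee ea le_terms eq_tapply.
rewrite prodf_div => <-; rewrite invfM invrK mulrCA divff ?mulr1 //.
by apply/prodf_neq0 => j _.
Qed.

End PositiveEigenvector.
End AdjacencyTensor.

Section ImageChain.
Local Open Scope classical_set_scope.
Variables (U : Type) (gT : finGroupType) (X : set U) (op : U -> U -> U) (e : U) (K : U -> gT).
Hypotheses (K_inj : forall y y', X y -> X y' -> K y = K y' -> y = y')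
  (K_op : forall y y', X y -> X y' -> K (op y y') = (K y * K y')%g) (K_e : K e = 1%g).

Lemma closed_chain_cl (S : nat -> set U) k :
  (forall i, (i <= k)%N ->
     [/\ S i `<=` X, S i e & forall y y', S i y -> S i y' -> S i (op y y')]) ->
  (forall i, (i < k)%N -> S i `<` S i.+1) -> (k <= cl #|gT|)%N.
Proof.
move=> S_closed S_chain.
pose T i : {set gT} := [set g | `[< exists2 y, S i y & g = K y >]]%SET.
have TP i g : reflect (exists2 y, S i y & g = K y) (g \in T i) by rewrite inE; apply: asboolP.
have T_group i : (i <= k)%N -> group_set (T i).
  move=> le_ik; have [SX Se Sop] := S_closed i le_ik; apply/group_setP; split.
    by apply/TP; exists e.
  move=> _ _ /TP[y Sy ->] /TP[y' Sy' ->]; apply/TP.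
  by exists (op y y'); [apply: Sop | rewrite K_op //; apply: SX].
have T_proper i : (i < k)%N -> T i \proper T i.+1.
  move=> lt_ik; have [sub_S not_sup] := S_chain i lt_ik.
  have [[SX _ _] [SX' _ _]] := (S_closed i (ltnW lt_ik), S_closed i.+1 lt_ik).
  rewrite fintype.properE; apply/andP; split.
    by apply/fintype.subsetP => _ /TP[y Sy ->]; apply/TP; exists y => //; apply: sub_S.
  apply/negP => /fintype.subsetP sub_T; apply: not_sup => y Sy.
  have /TP[y' Sy' eqK] : K y \in T i by apply: sub_T; apply/TP; exists y.
  by rewrite (K_inj (SX' _ Sy) (SX _ Sy') eqK).
apply: leq_trans (@proper_chain_cl _ (fun i => <<T i>>%G) k _) _.
  by move=> i lt_ik /=; rewrite !gen_set_id ?T_group ?T_proper // ltnW.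
by apply: cl_dvdn; rewrite -cardsT; [apply: cardG_gt0 | apply/cardSg/finset.subsetT].
Qed.

End ImageChain.

Section StabilizingBounds.
Variables (n m : nat) (E : {set {set 'I_n}}) (i0 : 'I_n).
Variables (d : nat) (vs : 'I_d.+1 -> 'I_n) (es : 'I_d -> {set 'I_n}).
Hypotheses (m_gt1 : (1 < m)%N) (E_uniform : uniform m E) (E_conn : hconnected E).
Hypothesis vs_es_path : is_path E vs es.
Local Notation A := (@adj_tensor n m E).

Let m_gt0 : (0 < m)%N. Proof. exact: ltnW. Qed.

Lemma stab_index_le_path : stab_index_le A i0 (m ^ (n - d - 1)).
Proof.
have [om om_prim] := prim_root_exists CC m_gt0.
move=> s s_uniq s_stab; pose key x := ratio_key m vs om (x : {ffun 'I_n -> CC}).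
have key_inj : {in s &, injective key}.
  move=> x x' /s_stab x_stab /s_stab x'_stab eq_key; apply/ffunP => j.
  have [[_ x_i0 _] [_ x'_i0 _]] := (x_stab, x'_stab).
  have eq_i0 : x i0 = x' i0 by rewrite x_i0 x'_i0.
  exact: (ratio_key_inj m_gt0 E_uniform E_conn vs_es_path m_gt1 om_prim
    (stabilizing_balanced m_gt0 E_uniform x_stab)
    (stabilizing_balanced m_gt0 E_uniform x'_stab) eq_i0 eq_key).
rewrite -(size_map key s) -(card_uniqP _) ?map_inj_in_uniq //.
by rewrite -(card_ratio_keys m_gt0 vs_es_path m_gt1) max_card.
Qed.

Lemma stab_dim_le_path : stab_dim_le A i0 ((n - d - 1) * cl m).
Proof.
have [om om_prim] := prim_root_exists CC m_gt0.
move=> vp [vp_eigen vp_i0] vp_gt0 k S S_sub S_chain.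
have vp_neq0 i : vp i != 0 by rewrite lt0r_neq0.
pose phase (y : 'I_n -> CC) i := y i / vp i.
have rho_i0 y : rho_vecs A i0 y -> y i0 = vp i0 by move=> [_ ->].
have phase_bal y : rho_vecs A i0 y -> balanced m E (phase y).
  move=> y_rho; have [y_eigen _] := y_rho.
  exact: (eigenvector_phase_balanced m_gt0 E_uniform E_conn vp_eigen vp_gt0
    y_eigen (rho_i0 _ y_rho)).
have rho_norm y : rho_vecs A i0 y -> forall i, `|y i| = vp i.
  move=> y_rho; have [y_eigen _] := y_rho.
  exact: (eigenvector_norm m_gt0 E_uniform E_conn vp_eigen vp_gt0
    y_eigen (rho_i0 _ y_rho)).
have phase_circ y y' : rho_vecs A i0 y -> rho_vecs A i0 y' ->
    phase (circ vp y y') = (fun i => phase y i * phase y' i).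
  move=> y_rho y'_rho; apply: funext => i.
  by rewrite /phase /circ !rho_norm ?mulfK.
pose K y := ratio_key m vs om (phase y).
rewrite -clX // -(card_ratio_keys m_gt0 vs_es_path m_gt1).
apply: (@closed_chain_cl _ _ (rho_vecs A i0) (circ vp) vp K) S_sub S_chain.
- move=> y y' y_rho y'_rho eqK; apply: funext => i.
  have eq_i0 : phase y i0 = phase y' i0 by rewrite /phase !rho_i0.
  have := ratio_key_inj m_gt0 E_uniform E_conn vs_es_path m_gt1 om_prim
    (phase_bal _ y_rho) (phase_bal _ y'_rho) eq_i0 eqK i.
  exact: (mulIf (invr_neq0 (vp_neq0 i))).
- move=> y y' y_rho y'_rho; rewrite /K phase_circ //.
  exact: (ratio_keyM m_gt0 E_conn vs m_gt1 om_prim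
    (phase_bal _ y_rho) (phase_bal _ y'_rho)).
- rewrite /K; have -> : phase vp = fun=> 1 by apply: funext => i; rewrite /phase divff.
  exact: ratio_key1.
Qed.

End StabilizingBounds.

Theorem corollary4p15 (n m : nat) (Hn : (0 < n)%N) (Hm : (2 <= m)%N)
  (E : {set {set 'I_n}}) (d : nat) :
  @uniform n m E -> hconnected E -> max_path_length E d ->
  stab_index_le (@adj_tensor n m E) (Ordinal Hn) (m ^ (n - d - 1)) /\
  stab_dim_le (@adj_tensor n m E) (Ordinal Hn) ((n - d - 1) * cl m).
Proof.
move=> E_uniform E_conn [[vs [es vs_es_path]] _].
split.
- exact: (stab_index_le_path Hm E_uniform E_conn vs_es_path).
- exact: (stab_dim_le_path Hm E_uniform E_conn vs_es_path).
Qed.
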